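(* Let $m$ be a positive integer and $p$ a prime such that $m\not\equiv 0\pmod 3$ and $p\equiv 1\pmod 3$. Then there is a constant $\beta>0$ such that for all sufficiently large $X$, \[ \#\{ n \leq X : p_{mp,p}(n)\equiv 1\pmod{2} \} \geq \beta \log\log X . \]
   Context: A partition $\lambda$ of a non-negative integer $n$ is a non-increasing sequence of positive integers (its parts) summing to $n$. For positive integers $A$ and $a$, $\mathrm{mex}_{A,a}(\lambda)$ denotes the smallest positive integer congruent to $a$ modulo $A$ that is not a part of $\lambda$. Then $p_{A,a}(n)$ denotes the number of partitions $\lambda$ of $n$ satisfying $\mathrm{mex}_{A,a}(\lambda)\equiv a \pmod{2A}$. Here $n$ ranges over positive integers. *)

From Stdlib Require Import Reals ZArith.
From mathcomp Require Import all_boot.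

Set Implicit Arguments.
Unset Strict Implicit.
Unset Printing Implicit Defensive.

Definition is_partition (n : nat) (l : seq nat) : bool :=
  [&& sorted geq l, all (fun x => 0 < x) l & sumn l == n].

Fixpoint lists_len (k : nat) (vals : seq nat) : seq (seq nat) :=
  match k with
  | 0 => [:: [::]]
  | k'.+1 => [seq x :: t | x <- vals, t <- lists_len k' vals]
  end.

(* A duplicate-free list of candidate sequences containing every partition of n:
   all lists of length <= n with entries in {1,...,n}. *)
Definition candidates (n : nat) : seq (seq nat) :=
  flatten [seq lists_len k (iota 1 n) | k <- iota 0 n.+1].

(* mex_{A,a}(l): the smallest positive integer k with k = a (mod A) that is not a part
   of l.  For A, a > 0, the integer B := a + A * (sumn l + 1) is positive, is = a mod A
   and exceeds every part, so the smallest such k lies in {1,...,B}. *)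
Definition mex (A a : nat) (l : seq nat) : nat :=
  let B := a + A * (sumn l).+1 in
  head 0 [seq k <- iota 1 B | (k == a %[mod A]) && (k \notin l)].

Definition p_mex (A a n : nat) : nat :=
  count (fun l => is_partition n l && (mex A a l == a %[mod 2 * A])) (candidates n).

Definition odd_count (A a : nat) (X : R) : nat :=
  count (fun n => odd (p_mex A a n)) (iota 1 (Z.to_nat (Int_part X))).

(* For 0 < a <= A, mex_{A,a}(l) = a + r A where r is the number of initial terms
   a, a + A, a + 2A, ... of the progression that are parts of l, so l is counted by
   p_{A,a}(n) iff r is even.  Hence p_{A,a}(n) = sum_l (r(l) + 1) = sum_k p(n - s_k)
   (mod 2), with p the partition function and s_k the sum of the first k terms.
   Multiplying by Euler's product prod_i (1 - q^i), which modulo 2 is the series of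
   the generalized pentagonal numbers, gives for every t
     sum_i p_{A,a}(i) c(t - i) = #{k | s_k = t}  (mod 2),
   where c(m) counts the representations of m as a generalized pentagonal number.
   If p_{A,a}(N) is odd, a computation modulo 3 (using 3 not dividing A) yields
   j in {N + 1, N + 2, N + 3} such that t = j(3j + 1)/2 + N is no s_k.  No pentagonal
   number lies in (j(3j + 1)/2, j(3j + 1)/2 + 2j], so the identity at t forces
   p_{A,a}(N') odd for some N < N' <= 16 (N + 1)^2.  Starting from p_{A,a}(0) = 1 this
   gives k odd values below 2^2^(k+3), i.e. at least (log log X)/8 of them up to X. *)

From Stdlib Require Import Reals ZArith Lra.
From mathcomp Require Import all_boot ssralg poly zmodp ring zify.

Set Implicit Arguments.
Unset Strict Implicit.
Unset Printing Implicit Defensive.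

Import GRing.Theory.

Fact geq_trans : transitive geq. Proof. exact: rev_trans leq_trans. Qed.
Fact geq_total : total geq. Proof. by move=> m n; apply: leq_total. Qed.
Fact geq_anti : antisymmetric geq.
Proof. by move=> m n /andP[? ?]; apply/eqP; rewrite eqn_leq; apply/andP. Qed.

Lemma mem_leq_sumn (l : seq nat) x : x \in l -> x <= sumn l.
Proof.
elim: l => [//|y l IHl]; rewrite inE /= => /orP[/eqP ->|/IHl]; first exact: leq_addr.
by move/leq_trans; apply; apply: leq_addl.
Qed.

Lemma size_leq_sumn (l : seq nat) : all (fun x => 0 < x) l -> size l <= sumn l.
Proof. by elim: l => [//|y l IHl] /= /andP[y_gt0 /IHl]; rewrite -add1n; apply: leq_add. Qed.

Lemma count_sum (T : Type) (P : pred T) (s : seq T) :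
  count P s = \sum_(x <- s) (P x : nat).
Proof. by rewrite -sumn_count sumnE big_map. Qed.

Lemma mem_map_cons (T : eqType) (x y : T) (s : seq T) (L : seq (seq T)) :
  (y :: s \in map (cons x) L) = (y == x) && (s \in L).
Proof.
by apply/mapP/andP => [[s' s'L [-> ->]]|[/eqP -> sL]]; [rewrite eqxx | exists s].
Qed.

Lemma head_filter_iota (P : pred nat) s L x : s <= x < s + L -> P x ->
  (forall y, s <= y < x -> ~~ P y) -> head 0 (filter P (iota s L)) = x.
Proof.
elim: L s => [|L IHL] s /=; first by rewrite addn0 => /andP[/leq_ltn_trans/[apply]]; rewrite ltnn.
case/andP=> le_sx lt_x Px before_x.
case: (ltngtP s x) le_sx => // [lt_sx|eq_sx] _; last by rewrite eq_sx Px.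
rewrite (negbTE (before_x s _)) ?leqnn //.
apply: IHL => //; first by rewrite lt_sx addSnnS.
by move=> y /andP[lt_sy lt_yx]; apply: before_x; rewrite lt_yx ltnW.
Qed.

(** * Partitions *)

Definition bpartition k n (l : seq nat) : bool :=
  [&& sorted geq l, all (fun x => 0 < x <= k) l & sumn l == n].

(* Partitions of [n] with parts at most [k], split by whether [k] is a part;
   the fuel only ensures termination (see [bparts_fuel_enough]). *)
Fixpoint bparts_fuel fuel k n : seq (seq nat) :=
  if fuel is f.+1 then
    if k is k'.+1 then
      bparts_fuel f k' n ++ (if k <= n then map (cons k) (bparts_fuel f k (n - k)) else [::])
    else if n == 0 then [:: [::]] else [::]
  else [::].

Definition bparts k n := bparts_fuel (k + n).+1 k n.

Notation partitions n := (bparts n n).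

Definition npart n := size (partitions n).

Lemma bpartition_nil k n : bpartition k n [::] = (n == 0).
Proof. by rewrite /bpartition eq_sym. Qed.

Lemma bpartition_cons k n x l : bpartition k n (x :: l) =
  [&& all (geq x) l, 0 < x <= k, x <= n & bpartition k (n - x) l].
Proof.
rewrite /bpartition /= (path_sortedE geq_trans).
have -> : (x + sumn l == n) = (x <= n) && (sumn l == n - x).
  by case: (leqP x n) => /=; lia.
by rewrite -!andbA; do !bool_congr.
Qed.

Lemma bpartition_widen k k' n l : k <= k' -> all (geq k) l ->
  bpartition k' n l = bpartition k n l.
Proof.
move=> le_kk' /allP l_le_k; rewrite /bpartition; congr [&& _, _ & _].
apply: eq_in_all => x /l_le_k /= x_le_k.
by rewrite x_le_k (leq_trans x_le_k le_kk').
Qed.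

Lemma bpartition_is_partition k n l : n <= k -> bpartition k n l = is_partition n l.
Proof.
move=> le_nk; rewrite /bpartition /is_partition.
case: eqP => [sum_l|_]; rewrite ?andbF ?andbT //; congr (_ && _).
apply: eq_in_all => x /mem_leq_sumn; rewrite sum_l => le_xn.
by rewrite (leq_trans le_xn le_nk) andbT.
Qed.

Lemma bpartition_parts_le k n l : bpartition k n l -> all (geq k) l.
Proof. by case/and3P => _ /allP l_le _; apply/allP => x /l_le /andP[]. Qed.

Lemma bpartitionS k n x l : bpartition k.+1 n (x :: l) =
  bpartition k n (x :: l) || [&& x == k.+1, k < n & bpartition k.+1 (n - k.+1) l].
Proof.
rewrite !bpartition_cons.
case: (ltngtP x k.+1) => [lt_xk|gt_xk|->].
- rewrite ltnS in lt_xk; rewrite lt_xk andbT /= orbF.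
  case l_le_x: (all _ l) => //=; congr (_ && (_ && _)).
  by rewrite (@bpartition_widen k) //; apply: sub_all l_le_x => y /leq_trans; apply.
- by rewrite andbF [x <= k]leqNgt (ltnW gt_xk) !andbF.
- rewrite ltnn andbF /=.
  by case: (boolP (bpartition _ _ l)) => [/bpartition_parts_le ->|]; rewrite ?andbF.
Qed.

Lemma mem_bparts_fuel f k n l : k + n < f -> (l \in bparts_fuel f k n) = bpartition k n l.
Proof.
elim: f k n l => [//|f IHf] [|k] n l /= lt_f.
  case: l => [|x l]; first by rewrite bpartition_nil; case: (n == 0).
  by rewrite bpartition_cons; case: x => [|x]; rewrite ?andbF; case: (n == 0).
rewrite mem_cat IHf; last by lia.
case: l => [|x l].
  rewrite !bpartition_nil; case: ifP => _; rewrite ?orbF // -[RHS]orbF; congr (_ || _).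
  by apply/mapP => -[].
rewrite bpartitionS; congr (_ || _); case: ifP => lt_kn; last by rewrite andbF.
by rewrite mem_map_cons IHf ?lt_kn //; lia.
Qed.

Lemma mem_bparts k n l : (l \in bparts k n) = bpartition k n l.
Proof. exact: mem_bparts_fuel. Qed.

Lemma uniq_bparts_fuel f k n : k + n < f -> uniq (bparts_fuel f k n).
Proof.
elim: f k n => [//|f IHf] [|k] n /= lt_f; first by case: (n == 0).
rewrite cat_uniq IHf; last by lia.
case: ifP => lt_kn //=; rewrite map_inj_uniq; last by move=> ? ? [].
rewrite IHf; last by lia.
rewrite andbT; apply/hasPn => _ /mapP[l _ ->].
by rewrite mem_bparts_fuel ?bpartition_cons ?ltnn ?andbF //; lia.
Qed.

Lemma uniq_bparts k n : uniq (bparts k n).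
Proof. exact: uniq_bparts_fuel. Qed.

Lemma bparts_fuel_enough f f' k n : k + n < f -> k + n < f' ->
  bparts_fuel f k n = bparts_fuel f' k n.
Proof.
elim: f f' k n => [//|f IHf] [//|f'] [|k] n //= lt_f lt_f'.
rewrite (IHf f'); [|lia|lia].
by case: ifP => // lt_kn; rewrite (IHf f') //; lia.
Qed.

Lemma bparts0 n : bparts 0 n = if n == 0 then [:: [::]] else [::].
Proof. by []. Qed.

Lemma bpartsS k n : bparts k.+1 n =
  bparts k n ++ (if k < n then map (cons k.+1) (bparts k.+1 (n - k.+1)) else [::]).
Proof.
have -> : bparts k.+1 n = bparts k n ++ (if k < n then
    map (cons k.+1) (bparts_fuel (k + n).+1 k.+1 (n - k.+1)) else [::]) by [].
case: ifP => // lt_kn.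
by rewrite /bparts (@bparts_fuel_enough (k + n).+1 (k.+1 + (n - k.+1)).+1 k.+1) //; lia.
Qed.

Lemma size_bparts k n : n <= k -> size (bparts k n) = npart n.
Proof.
move=> le_nk; apply/perm_size/uniq_perm; rewrite ?uniq_bparts // => l.
by rewrite !mem_bparts !bpartition_is_partition.
Qed.

Lemma mem_lists_len k (vals l : seq nat) :
  (l \in lists_len k vals) = (size l == k) && all (fun x => x \in vals) l.
Proof.
elim: k l => [|k IHk] [|x l] //=.
  by apply/negbTE/negP => /allpairsP[[y t] /= [_ _]].
apply/allpairsP/idP => [[[y t] /= [y_in t_in [-> ->]]]|/andP[/eqP[size_l] /andP[x_in l_in]]].
  by move: t_in; rewrite IHk => /andP[/eqP -> ->]; rewrite y_in eqxx.
by exists (x, l); rewrite /= IHk size_l eqxx l_in x_in.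
Qed.

Lemma uniq_lists_len k (vals : seq nat) : uniq vals -> uniq (lists_len k vals).
Proof.
move=> uniq_vals; elim: k => [//|k IHk] /=.
by apply: allpairs_uniq => // -[x t] [y u] _ _ /= [-> ->].
Qed.

Lemma mem_candidates n l :
  (l \in candidates n) = (size l <= n) && all (fun x => x \in iota 1 n) l.
Proof.
apply/flatten_mapP/idP => [[k k_in]|/andP[size_l l_in]].
  by rewrite mem_lists_len => /andP[/eqP -> ->]; move: k_in; rewrite mem_iota ltnS andbT.
by exists (size l); rewrite ?mem_lists_len ?eqxx ?l_in // mem_iota ltnS.
Qed.

Lemma uniq_candidates n : uniq (candidates n).
Proof.
rewrite /candidates; elim: (iota 0 n.+1) (iota_uniq 0 n.+1) => //= k ks IHks /andP[k_notin uniq_ks].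
rewrite cat_uniq uniq_lists_len ?iota_uniq ?IHks //= andbT.
apply/hasPn => l /flatten_mapP[k' k'_in]; rewrite !mem_lists_len => /andP[/eqP size_l _].
by apply/negP => /andP[/eqP size_l' _]; move: k_notin; rewrite -size_l' size_l k'_in.
Qed.

Lemma perm_candidates_partitions n :
  perm_eq (filter (is_partition n) (candidates n)) (partitions n).
Proof.
apply: uniq_perm; rewrite ?filter_uniq ?uniq_candidates ?uniq_bparts // => l.
rewrite mem_filter mem_bparts bpartition_is_partition //.
case part_l: (is_partition n l) => //=; rewrite mem_candidates.
case/and3P: part_l => _ l_gt0 /eqP sum_l.
rewrite -[X in size l <= X]sum_l size_leq_sumn //=.
apply/allP => x x_in; rewrite mem_iota add1n ltnS -sum_l mem_leq_sumn // andbT.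
exact: (allP l_gt0).
Qed.

Lemma count_partitions n (Q : pred (seq nat)) :
  count (fun l => is_partition n l && Q l) (candidates n) = count Q (partitions n).
Proof.
rewrite -(permP (perm_candidates_partitions n)) count_filter.
by apply: eq_count => l; rewrite andbC.
Qed.

Lemma perm_eq_uniq_subset (T : eqType) (W l : seq T) :
  uniq W -> {subset W <= l} -> exists mu, perm_eq l (W ++ mu).
Proof.
elim: W l => [|x W IHW] l /=; first by exists l.
case/andP=> x_notin_W uniq_W W_sub.
have x_in_l : x \in l by apply: W_sub; rewrite inE eqxx.
have [|mu perm_mu] := IHW (rem x l) uniq_W.
  move=> y y_in_W; apply: rem_mem; last by apply: W_sub; rewrite inE y_in_W orbT.
  by apply: contraNneq x_notin_W => <-.
by exists mu; apply: perm_trans (perm_to_rem x_in_l) _; rewrite perm_cons.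
Qed.

Lemma is_partition_sort_cat (W mu : seq nat) m :
  all (fun x => 0 < x) W -> is_partition m mu ->
  is_partition (sumn W + m) (sort geq (W ++ mu)).
Proof.
move=> W_gt0 /and3P[_ mu_gt0 /eqP sum_mu].
have perm_sort_cat : perm_eq (sort geq (W ++ mu)) (W ++ mu) by rewrite perm_sort.
rewrite /is_partition sort_sorted ?(perm_all _ perm_sort_cat) ?(perm_sumn perm_sort_cat) //.
  by rewrite all_cat W_gt0 mu_gt0 sumn_cat sum_mu eqxx.
exact: geq_total.
Qed.

Lemma partition_containing_split (W lam : seq nat) n :
  uniq W -> is_partition n lam -> all (fun x => x \in lam) W ->
  exists mu, [/\ is_partition (n - sumn W) mu, lam = sort geq (W ++ mu) & sumn W <= n].
Proof.
move=> uniq_W /and3P[sorted_lam lam_gt0 /eqP sum_lam] /allP W_sub.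
have [mu perm_lam] := perm_eq_uniq_subset uniq_W W_sub.
have sum_split : sumn lam = sumn W + sumn mu by rewrite (perm_sumn perm_lam) sumn_cat.
have perm_mu : perm_eq (sort geq mu) mu by rewrite perm_sort.
exists (sort geq mu); split.
- rewrite /is_partition sort_sorted ?(perm_all _ perm_mu) ?(perm_sumn perm_mu); last first.
    exact: geq_total.
  move: lam_gt0; rewrite (perm_all _ perm_lam) all_cat => /andP[_ ->].
  by rewrite -sum_lam sum_split addKn eqxx.
- apply: (sorted_eq geq_trans geq_anti sorted_lam (sort_sorted geq_total _)).
  by rewrite perm_sym perm_sort perm_sym (permPl perm_lam) perm_cat2l perm_sym.
- by rewrite -sum_lam sum_split leq_addr.
Qed.

Lemma count_partitions_containing (W : seq nat) n :
  uniq W -> all (fun x => 0 < x) W ->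
  count (fun l => all (fun x => x \in l) W) (partitions n) =
  if sumn W <= n then npart (n - sumn W) else 0.
Proof.
move=> uniq_W W_gt0; case: ifP => [le_Wn|gt_Wn]; last first.
  apply/eqP; rewrite -leqn0 leqNgt -has_count; apply/hasPn => lam.
  rewrite mem_bparts bpartition_is_partition // => part_lam; apply/negP => W_sub.
  have [mu [_ _ le_Wn]] := partition_containing_split uniq_W part_lam W_sub.
  by rewrite le_Wn in gt_Wn.
rewrite -size_filter /npart -(size_map (fun mu => sort geq (W ++ mu))).
apply/perm_size/uniq_perm; first by rewrite filter_uniq ?uniq_bparts.
  rewrite map_inj_in_uniq ?uniq_bparts // => mu1 mu2.
  rewrite !mem_bparts !bpartition_is_partition // => /and3P[sorted1 _ _] /and3P[sorted2 _ _].
  move/(perm_sortP geq_total geq_trans geq_anti); rewrite perm_cat2l.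
  exact: (sorted_eq geq_trans geq_anti).
move=> lam; rewrite mem_filter mem_bparts bpartition_is_partition //; apply/andP/mapP.
  case=> W_sub part_lam.
  have [mu [part_mu -> _]] := partition_containing_split uniq_W part_lam W_sub.
  by exists mu; rewrite ?mem_bparts ?bpartition_is_partition.
case=> mu; rewrite mem_bparts bpartition_is_partition // => part_mu ->; split.
  by apply/allP => x x_in_W; rewrite mem_sort mem_cat x_in_W.
by rewrite -[X in is_partition X](subnKC le_Wn) is_partition_sort_cat.
Qed.

(** * The statistic mex_{A,a} *)

Definition arith_run A a (l : seq nat) : nat :=
  find (fun i => a + i * A \notin l) (iota 0 (sumn l).+1).

Definition progression A a k := [seq a + i * A | i <- iota 0 k].

Section ArithRun.

Variables (A a : nat).
Hypotheses (a_gt0 : 0 < a) (a_le_A : a <= A).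

Let A_gt0 : 0 < A. Proof. exact: leq_trans a_le_A. Qed.

Lemma arith_runP l :
  [/\ arith_run A a l <= sumn l, a + arith_run A a l * A \notin l
    & forall i, i < arith_run A a l -> a + i * A \in l].
Proof.
have has_missing : has (fun i => a + i * A \notin l) (iota 0 (sumn l).+1).
  apply/hasP; exists (sumn l); first by rewrite mem_iota ltnSn.
  apply: contraTN isT => /mem_leq_sumn; rewrite leqNgt; apply: contraNN => _.
  by rewrite -add1n leq_add // leq_pmulr.
have := has_missing; rewrite has_find size_iota => run_lt.
split; first by rewrite -ltnS.
  by have := nth_find 0 has_missing; rewrite nth_iota.
move=> i lt_i_run; have := before_find 0 lt_i_run; rewrite nth_iota ?add0n ?(ltn_trans lt_i_run) //.
exact: negbFE.
Qed.

Lemma all_progression_in l k :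
  all (fun x => x \in l) (progression A a k) = (k <= arith_run A a l).
Proof.
have [_ run_notin run_in] := arith_runP l.
rewrite all_map; apply/allP/idP => [l_has|le_k_run i].
  by rewrite leqNgt; apply: contra run_notin => /= lt_run_k; apply: (l_has _); rewrite mem_iota.
by rewrite mem_iota => /andP[_ lt_ik]; apply: run_in; apply: leq_trans lt_ik le_k_run.
Qed.

Lemma mex_arith_run l : mex A a l = a + arith_run A a l * A.
Proof.
have [run_le run_notin run_in] := arith_runP l.
rewrite /mex; apply: head_filter_iota.
- rewrite (leq_trans a_gt0 (leq_addr _ _)) add1n ltnS leq_add2l mulnC leq_mul2l.
  by rewrite ltnW ?orbT.
- by rewrite run_notin andbT addnC modnMDl.
move=> y /andP[y_gt0 lt_y]; apply/negP => /andP[y_mod /negP]; apply.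
have le_ay : a <= y.
  rewrite leqNgt; apply/negP => lt_ya; move: y_mod.
  rewrite (modn_small (leq_trans lt_ya a_le_A)); case: (ltngtP a A) a_le_A => // [lt_aA|->] _.
    by rewrite modn_small // => /eqP eq_ya; rewrite eq_ya ltnn in lt_ya.
  by rewrite modnn => /eqP y0; rewrite y0 in y_gt0.
move: y_mod; rewrite eqn_mod_dvd // => /dvdnP[q eq_q].
rewrite -(subnKC le_ay) eq_q; apply: run_in.
by rewrite -(ltn_pmul2r A_gt0) -(ltn_add2l a) -eq_q subnKC.
Qed.

Lemma mex_mod2A l : (mex A a l == a %[mod 2 * A]) = ~~ odd (arith_run A a l).
Proof.
rewrite mex_arith_run; set r := arith_run A a l.
have -> : a + r * A = r./2 * (2 * A) + (a + odd r * A).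
  by rewrite -{1}(odd_double_half r) -muln2; lia.
rewrite modnMDl; case: (odd r); last by rewrite mul0n addn0 eqxx.
rewrite mul1n eqn_mod_dvd ?leq_addr // addKn; apply/negP => /dvdn_leq.
by rewrite A_gt0 => /(_ isT); rewrite leqNgt mulnC -{1}(muln1 A) ltn_pmul2l.
Qed.

Lemma uniq_progression k : uniq (progression A a k).
Proof.
rewrite map_inj_uniq ?iota_uniq // => i j /addnI /eqP.
by rewrite eqn_pmul2r // => /eqP.
Qed.

Lemma progression_gt0 k : all (fun x => 0 < x) (progression A a k).
Proof. by rewrite all_map; apply/allP => i _ /=; rewrite ltn_addr. Qed.

End ArithRun.

Lemma sumn_progression A a k : 2 * sumn (progression A a k) + A * k = 2 * k * a + A * (k * k).
Proof.
elim: k => [|k IHk]; first by rewrite /progression /= !muln0.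
have -> : progression A a k.+1 = progression A a k ++ [:: a + k * A].
  by rewrite /progression -addn1 iotaD map_cat.
by rewrite sumn_cat /=; nia.
Qed.

Lemma odd_count_even (T : Type) (f : T -> nat) (s : seq T) :
  odd (count (fun x => ~~ odd (f x)) s) = odd (\sum_(x <- s) (f x).+1).
Proof.
elim: s => [|x s IHs]; rewrite ?big_nil ?big_cons //= !oddD IHs /=.
by case: (odd (f x)); case: (odd (\sum_(j <- s) _)).
Qed.

Lemma sum_ord_leq K m : \sum_(k < K) (k <= m : nat) = minn K m.+1.
Proof.
elim: K => [|K IHK]; first by rewrite big_ord0.
by rewrite big_ord_recr /= IHK; case: (leqP K m) => ?; lia.
Qed.

(* A partition with run r contributes r + 1 = #{k | k <= r} to the sum, which has
   the parity of the indicator of r even. *)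
Lemma odd_p_mex A a n K : 0 < a -> a <= A -> n < K ->
  odd (p_mex A a n) =
  odd (\sum_(k < K)
         if sumn (progression A a k) <= n then npart (n - sumn (progression A a k)) else 0).
Proof.
move=> a_gt0 a_le_A lt_nK.
under eq_bigr => k _ do rewrite -count_partitions_containing ?uniq_progression ?progression_gt0 //.
rewrite /p_mex count_partitions (eq_count (a2 := fun l => ~~ odd (arith_run A a l))); last first.
  by move=> l; rewrite mex_mod2A.
rewrite odd_count_even; congr odd; symmetry.
rewrite (eq_bigr (fun k : 'I_K => \sum_(l <- partitions n)
    (all (fun x => x \in l) (progression A a k) : nat))); last by move=> k _; rewrite count_sum.
rewrite exchange_big /=; apply: eq_big_seq => l.
rewrite mem_bparts bpartition_is_partition // => /and3P[_ _ /eqP sum_l].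
under eq_bigr => k _ do rewrite all_progression_in //.
have [run_le _ _] := arith_runP a_gt0 a_le_A l.
by rewrite sum_ord_leq; apply/minn_idPr; rewrite (leq_ltn_trans run_le) // sum_l.
Qed.

(** * Pentagonal numbers and Euler's product *)

(* The generalized pentagonal numbers j(3j - 1)/2 and j(3j + 1)/2. *)
Definition pent_lo j := j * j + 'C(j, 2).
Definition pent_hi j := j * j + 'C(j.+1, 2).

(* Representations of m as a generalized pentagonal number of index at most n; the
   index 0, where both forms vanish, is counted once. *)
Definition pent_reps n m :=
  (m == 0) + count (fun j => pent_lo j == m) (iota 1 n)
  + count (fun j => pent_hi j == m) (iota 1 n).

Definition pent_count m := pent_reps m m.

Lemma pent_lo_ge j : j <= pent_lo j.
Proof. by rewrite /pent_lo; case: j => // j; nia. Qed.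

Lemma pent_hi_ge j : j <= pent_hi j.
Proof. by rewrite /pent_hi; case: j => // j; nia. Qed.

Lemma pent_reps_count n m : m <= n -> pent_reps n m = pent_count m.
Proof.
move=> le_mn; rewrite /pent_count /pent_reps -(subnKC le_mn) iotaD !count_cat.
have no_large (f : nat -> nat) :
    (forall j, j <= f j) -> count (fun j => f j == m) (iota (1 + m) (n - m)) = 0.
  move=> f_ge; apply/eqP; rewrite -leqn0 leqNgt -has_count; apply/hasPn => j.
  rewrite mem_iota => /andP[lt_mj _]; apply/negP => /eqP f_j.
  by have := f_ge j; rewrite f_j leqNgt -add1n lt_mj.
by rewrite (no_large _ pent_lo_ge) (no_large _ pent_hi_ge) !addn0.
Qed.

Lemma pent_lo_closed j : 2 * pent_lo j + j = 3 * (j * j).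
Proof. rewrite /pent_lo; elim: j => [//|j IHj]; rewrite binS bin1; nia. Qed.

Lemma pent_hi_closed j : 2 * pent_hi j = 3 * (j * j) + j.
Proof. by have := pent_lo_closed j; rewrite /pent_lo /pent_hi binS bin1; lia. Qed.

Lemma pent_lo_le_hi j : pent_lo j <= pent_hi j.
Proof. by rewrite leq_add2l binS leq_addr. Qed.

Lemma pent_hi_mono j j' : j' < j -> pent_hi j' < pent_hi j.
Proof.
move=> lt_j'j; have := leq_mul lt_j'j lt_j'j.
by have := pent_hi_closed j; have := pent_hi_closed j'; nia.
Qed.

Lemma pent_lo_lt_pent_hi j j' : 0 < j -> j' <= j -> pent_lo j' < pent_hi j.
Proof.
move=> j_gt0 le_j'j; have := leq_mul le_j'j le_j'j.
by have := pent_hi_closed j; have := pent_lo_closed j'; nia.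
Qed.

Lemma pent_hi_gap j j' : j < j' -> pent_hi j + 2 * j < pent_lo j'.
Proof.
move=> lt_jj'; have := leq_mul lt_jj' lt_jj'.
by have := pent_hi_closed j; have := pent_lo_closed j'; nia.
Qed.

Lemma pent_count_gap j m : pent_hi j < m <= pent_hi j + 2 * j -> pent_count m = 0.
Proof.
case/andP=> lt_m le_m.
have not_pent j' : (pent_lo j' != m) && (pent_hi j' != m).
  have := pent_lo_le_hi j'; case: (ltngtP j' j) => [/pent_hi_mono|/pent_hi_gap|->]; lia.
rewrite /pent_count /pent_reps (gtn_eqF (leq_ltn_trans (leq0n _) lt_m)).
by rewrite !(@eq_count _ _ pred0) ?count_pred0 // => j' /=; apply/negbTE; case/andP: (not_pent j').
Qed.

Lemma pent_count_hi j : 0 < j -> pent_count (pent_hi j) = 1.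
Proof.
move=> j_gt0; rewrite /pent_count /pent_reps (gtn_eqF (leq_trans j_gt0 (pent_hi_ge j))).
rewrite (@eq_count _ _ pred0) ?count_pred0; last first.
  move=> j' /=; apply/negbTE; case: (leqP j' j) => [/(pent_lo_lt_pent_hi j_gt0)|/pent_hi_gap]; lia.
rewrite (@eq_count _ _ (pred1 j)); last first.
  by move=> j' /=; case: (ltngtP j' j) => [/pent_hi_mono|/pent_hi_mono|->]; rewrite ?eqxx; lia.
by rewrite count_uniq_mem ?iota_uniq // mem_iota j_gt0 add1n ltnS pent_hi_ge.
Qed.

Section PentagonalIdentity.

Local Open Scope ring_scope.

Variable Rg : comNzRingType.

Definition euler_tail n k : {poly Rg} := \prod_(k <= i < n) (1 - 'X^(i.+1)).

Definition shanks_term n k : {poly Rg} := (-1) ^+ k * 'X^(n * k + 'C(k.+1, 2)) * euler_tail n k.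

Fixpoint pent_poly n : {poly Rg} :=
  if n is n'.+1 then pent_poly n' + (-1) ^+ n * ('X^(pent_lo n) + 'X^(pent_hi n)) else 1.

Lemma euler_tail_id n : euler_tail n n = 1.
Proof. by rewrite /euler_tail big_geq. Qed.

Lemma euler_tail_recr n k : (k <= n)%N -> euler_tail n.+1 k = euler_tail n k * (1 - 'X^(n.+1)).
Proof. by move=> le_kn; rewrite /euler_tail big_nat_recr. Qed.

Lemma euler_tail_recl n k : (k < n)%N -> euler_tail n k = (1 - 'X^(k.+1)) * euler_tail n k.+1.
Proof. by move=> lt_kn; rewrite /euler_tail big_ltn. Qed.

Lemma shanks_term_recr n k : (k <= n)%N ->
  shanks_term n.+1 k = 'X^k * (1 - 'X^(n.+1)) * shanks_term n k.
Proof.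
move=> le_kn; rewrite /shanks_term euler_tail_recr // mulSn -addnA addnCA exprD.
by rewrite !exprD; ring.
Qed.

Lemma shanks_term_recl n k : (k < n)%N ->
  (1 - 'X^(k.+1)) * shanks_term n k.+1 = - ('X^(k + n.+1) * shanks_term n k).
Proof.
move=> lt_kn; rewrite /shanks_term (euler_tail_recl lt_kn) binS bin1 mulnS.
rewrite (_ : (n + n * k + ('C(k.+1, 2) + k.+1) = (n * k + 'C(k.+1, 2)) + (k + n.+1))%N);
  last by lia.
by rewrite exprD (exprS (-1)); ring.
Qed.

(* Shanks' finite form of Euler's pentagonal number theorem: the term k = 0 is
   prod_(i < n) (1 - X^(i+1)) and the other terms are divisible by X^(n+1). *)
Lemma shanks_sum n : \sum_(0 <= k < n.+1) shanks_term n k = pent_poly n.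
Proof.
elim: n => [|n IHn].
  by rewrite big_nat1 /shanks_term euler_tail_id muln0 /= expr0 !mulr1.
pose B k := if k is k'.+1 then - ('X^(k' + n.+1) * shanks_term n k') else 0.
have B_eq k : (k <= n)%N -> B k = (1 - 'X^k) * shanks_term n k.
  by case: k => [|k] lt_kn /=; rewrite ?expr0 ?subrr ?mul0r // shanks_term_recl.
have step k : (k <= n)%N -> shanks_term n.+1 k = (B k.+1 - B k) + shanks_term n k.
  by move=> le_kn; rewrite shanks_term_recr // [B k]B_eq //= exprD; ring.
rewrite /= -IHn big_nat_recr //=.
rewrite (eq_big_nat _ _ (F2 := fun k => (B k.+1 - B k) + shanks_term n k)); last first.
  by move=> k /andP[_]; apply: step.
rewrite big_split /= telescope_sumr // /pent_lo /pent_hi /B /shanks_term.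
rewrite !euler_tail_id !mulr1 subr0.
rewrite (_ : (n.+1 * n.+1 + 'C(n.+1, 2) = n + n.+1 + (n * n + 'C(n.+1, 2)))%N); last first.
  by rewrite mulSn mulnS; lia.
by rewrite !exprD (exprS (-1)); ring.
Qed.

Lemma coef_euler_tail0 n m : (m <= n)%N -> (euler_tail n 0)`_m = (pent_poly n)`_m.
Proof.
move=> le_mn; rewrite -shanks_sum big_ltn // coefD coef_sum big1_seq ?addr0.
  by rewrite /shanks_term muln0 expr0 !mul1r.
move=> k /andP[_]; rewrite mem_iota => /andP[k_gt0 _].
rewrite /shanks_term mulrAC coefMXn ifT // binS bin1; nia.
Qed.

End PentagonalIdentity.

Lemma natZ2_odd x : (x%:R : 'Z_2)%R = (odd x)%:R%R.
Proof. by apply/val_inj; rewrite /= !val_Zp_nat // modn2; case: (odd x). Qed.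

Lemma natZ2_inj_odd x y : (x%:R : 'Z_2)%R = y%:R%R -> odd x = odd y.
Proof. by move/(congr1 val); rewrite /= !val_Zp_nat // !modn2; case: (odd x); case: (odd y). Qed.

Lemma coef_pent_poly_Z2 n m : ((pent_poly 'Z_2 n)`_m = (pent_reps n m)%:R)%R.
Proof.
have m1_Z2 : (-1 : {poly 'Z_2})%R = 1%R by rewrite -polyCN -polyC1; congr (_%:P)%R; apply/val_inj.
elim: n => [|n IHn]; first by rewrite coef1 /pent_reps /= !addn0.
rewrite /= coefD IHn m1_Z2 expr1n mul1r coefD !coefXn /pent_reps.
have -> : iota 1 n.+1 = iota 1 n ++ [:: n.+1] by rewrite -[in LHS](addn1 n) iotaD.
rewrite !count_cat /= !addn0 !natrD [pent_lo _ == m]eq_sym [pent_hi _ == m]eq_sym.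
by ring.
Qed.

(** * The parity identity *)

Section Convolution.

Local Open Scope ring_scope.

Variable Rg : comNzRingType.
Implicit Types f g : nat -> Rg.

Definition conv f g n := \sum_(0 <= i < n.+1) f i * g (n - i)%N.

Definition shift c f i := if (c <= i)%N then f (i - c)%N else 0.

Lemma eq_conv f f' g g' n :
  (forall i, (i <= n)%N -> f i = f' i) -> (forall i, (i <= n)%N -> g i = g' i) ->
  conv f g n = conv f' g' n.
Proof.
move=> eq_f eq_g; apply: eq_big_nat => i /andP[_ le_in].
by rewrite eq_f // eq_g ?leq_subr.
Qed.

Lemma convC f g n : conv f g n = conv g f n.
Proof.
rewrite /conv big_nat_rev /=; apply: eq_big_nat => i /andP[_ lt_in].
by rewrite add0n subSS subKn // mulrC.
Qed.

Lemma conv_shiftr f g c n :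
  conv f (shift c g) n = if (c <= n)%N then conv f g (n - c) else 0.
Proof.
rewrite /conv /shift; case: ifP => le_cn; last first.
  by rewrite big1_seq // => i; rewrite mem_iota ifF ?mulr0 //; lia.
rewrite (big_cat_nat _ (n := (n - c).+1)) //=; last by rewrite ltnS leq_subr.
rewrite [X in _ + X]big1_seq ?addr0 => [|i /andP[_]]; last first.
  by rewrite mem_iota => range_i; rewrite ifF ?mulr0 //; lia.
by apply: eq_big_nat => i /andP[_ lt_i]; rewrite ifT; [congr (_ * g _)|]; lia.
Qed.

Lemma conv_shiftl f g c n :
  conv (shift c f) g n = if (c <= n)%N then conv f g (n - c) else 0.
Proof. by rewrite convC conv_shiftr convC. Qed.

Lemma conv_addl f1 f2 g n : conv (fun i => f1 i + f2 i) g n = conv f1 g n + conv f2 g n.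
Proof. by rewrite /conv -big_split; apply: eq_bigr => i _; rewrite mulrDl. Qed.

Lemma conv_subr f g1 g2 n : conv f (fun i => g1 i - g2 i) n = conv f g1 n - conv f g2 n.
Proof. by rewrite /conv -sumrB; apply: eq_bigr => i _; rewrite mulrBr. Qed.

Lemma conv_suml K (F : nat -> nat -> Rg) g n :
  conv (fun i => \sum_(k < K) F k i) g n = \sum_(k < K) conv (F k) g n.
Proof. by rewrite /conv; under eq_bigr => i _ do rewrite mulr_suml; rewrite exchange_big. Qed.

Lemma conv_bparts_euler_tail k n :
  conv (fun i => (size (bparts k i))%:R) (fun m => (euler_tail Rg k 0)`_m) n = (n == 0)%:R.
Proof.
elim: k n => [|k IHk] n.
  rewrite /conv big_ltn // subn0 bparts0 /= euler_tail_id coef1 mul1r big1_seq ?addr0 //.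
  by move=> [|i] /andP[_]; rewrite ?mem_iota // bparts0 mul0r.
have bparts_rec i : (size (bparts k.+1 i))%:R =
    (size (bparts k i))%:R + shift k.+1 (fun i => (size (bparts k.+1 i))%:R) i :> Rg.
  by rewrite bpartsS size_cat /shift; case: ifP; rewrite ?size_map ?natrD ?addr0.
have euler_rec m : (euler_tail Rg k.+1 0)`_m =
    (euler_tail Rg k 0)`_m - shift k.+1 (fun m => (euler_tail Rg k 0)`_m) m.
  rewrite euler_tail_recr // mulrBr mulr1 coefB coefMXn /shift ltnNge.
  by case: (k < m).
rewrite (eq_conv (fun i _ => erefl) (fun m _ => euler_rec m)) conv_subr conv_shiftr.
rewrite (eq_conv (fun i _ => bparts_rec i) (fun m _ => erefl)) conv_addl conv_shiftl IHk.
by case: ifP => _; rewrite ?addrK ?addr0 ?subr0.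
Qed.

End Convolution.

Section ParityOfPMex.

Local Open Scope ring_scope.

Lemma conv_npart_pent_count u :
  conv (fun i => (npart i)%:R : 'Z_2) (fun m => (pent_count m)%:R) u = (u == 0)%:R.
Proof.
rewrite -(conv_bparts_euler_tail 'Z_2 u u).
apply: eq_conv => i le_iu; first by rewrite size_bparts.
by rewrite coef_euler_tail0 // coef_pent_poly_Z2 pent_reps_count.
Qed.

Variables A a : nat.
Hypotheses (a_gt0 : (0 < a)%N) (a_le_A : (a <= A)%N).

Lemma p_mex_Z2 i K : (i < K)%N -> (p_mex A a i)%:R =
  \sum_(k < K) shift (sumn (progression A a k)) (fun j => (npart j)%:R) i :> 'Z_2.
Proof.
move=> lt_iK; rewrite natZ2_odd (odd_p_mex a_gt0 a_le_A lt_iK) -natZ2_odd natr_sum.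
by apply: eq_bigr => k _; rewrite /shift; case: ifP.
Qed.

Lemma conv_p_mex_pent_count t :
  conv (fun i => (p_mex A a i)%:R : 'Z_2) (fun m => (pent_count m)%:R) t =
  (count (fun k => sumn (progression A a k) == t) (iota 0 t.+1))%:R.
Proof.
rewrite (eq_conv (fun i le_it => p_mex_Z2 (K := t.+1) le_it) (fun m _ => erefl)).
rewrite (conv_suml t.+1 (fun k => shift (sumn (progression A a k)) (fun j => (npart j)%:R))).
rewrite count_sum natr_sum (_ : iota 0 t.+1 = index_iota 0 t.+1) ?big_mkord; last first.
  by rewrite /index_iota subn0.
apply: eq_bigr => k _; rewrite conv_shiftl conv_npart_pent_count.
by case: ltngtP => [lt_kt|gt_kt|->]; rewrite ?subnn // subn_eq0 leqNgt lt_kt.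
Qed.

Lemma odd_conv_p_mex t :
  odd (\sum_(0 <= i < t.+1) p_mex A a i * pent_count (t - i)) =
  odd (count (fun k => sumn (progression A a k) == t) (iota 0 t.+1)).
Proof.
apply: natZ2_inj_odd; rewrite -conv_p_mex_pent_count natr_sum.
by apply: eq_bigr => i _; rewrite natrM.
Qed.

End ParityOfPMex.

(** * Odd values and the lower bound *)

Lemma natZ3_mod x : (x%:R : 'Z_3)%R = (x %% 3)%:R%R.
Proof. by apply/val_inj; rewrite /= !val_Zp_nat // modn_mod. Qed.

Lemma Z3_quadratic_misses :
  all (fun rA => all (fun ra => has (fun i => all (fun rk =>
    (2 * rk%:R * ra%:R + rA%:R * (rk%:R * rk%:R) != i%:R + rA%:R * rk%:R :> 'Z_3)%R)
  (iota 0 3)) (iota 1 3)) (iota 0 3)) [:: 1; 2].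
Proof. by []. Qed.

(* Since 2 t = 3 (j^2 + N) + i for t = pent_hi j + N and j = N + i, while
   s_k = sumn (progression A a k) satisfies 2 s_k + A k = 2 k a + A k^2, a solution of
   s_k = t would solve 2 k a + A k^2 = i + A k (mod 3), which fails for a suitable i. *)
Lemma pent_shift_off_progression A a N : A %% 3 != 0 ->
  exists2 i, 0 < i <= 3 & forall k, sumn (progression A a k) != pent_hi (N + i) + N.
Proof.
move=> A3; have mod3_in x : x %% 3 \in iota 0 3 by rewrite mem_iota ltn_mod.
have A3_in : A %% 3 \in [:: 1; 2] by move: A3 (ltn_mod A 3); case: (A %% 3) => [|[|[|]]].
have /hasP[i i_in /allP misses] := allP (allP Z3_quadratic_misses _ A3_in) _ (mod3_in a).
exists i => [|k]; first by move: i_in; rewrite mem_iota.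
apply/eqP => sum_k; have := misses _ (mod3_in k); apply/negP; rewrite negbK; apply/eqP.
have eq_nat : 2 * k * a + A * (k * k) = ((N + i) * (N + i) + N) * 3 + (i + A * k).
  by have := sumn_progression A a k; have := pent_hi_closed (N + i); rewrite sum_k; nia.
have Z3_3 : (3%:R : 'Z_3)%R = 0%R by apply/val_inj.
move/(congr1 (fun x => x%:R : 'Z_3)%R): eq_nat.
by rewrite !natrD !natrM Z3_3 mulr0 add0r (natZ3_mod A) (natZ3_mod a) (natZ3_mod k).
Qed.

Lemma even_sum (I : Type) (r : seq I) (P : pred I) (F : I -> nat) :
  (forall i, P i -> ~~ odd (F i)) -> ~~ odd (\sum_(i <- r | P i) F i).
Proof.
move=> F_even; apply: (big_ind (fun x => ~~ odd x)) => // x y x_even y_even.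
by rewrite oddD (negbTE x_even) (negbTE y_even).
Qed.

Lemma odd_conv_pent_gap (f : nat -> nat) j N : 0 < j -> N <= 2 * j ->
  (forall n, N < n <= pent_hi j + N -> ~~ odd (f n)) ->
  odd (\sum_(0 <= i < (pent_hi j + N).+1) f i * pent_count (pent_hi j + N - i)) = odd (f N).
Proof.
move=> j_gt0 le_N2j f_even; set t := pent_hi j + N.
have le_Nt : N <= t by rewrite leq_addl.
rewrite (bigD1_seq N) ?mem_index_iota ?iota_uniq //= {2}/t addnK pent_count_hi // muln1 oddD.
rewrite -[RHS]addbF; congr addb; apply/negbTE; rewrite big_seq_cond; apply: even_sum => i /andP[].
rewrite mem_index_iota /= ltnS => le_it; case: (ltngtP i N) => // [lt_iN|lt_Ni] _.
  by rewrite (@pent_count_gap j) ?muln0 //; rewrite /t; lia.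
by rewrite oddM negb_and f_even ?lt_Ni.
Qed.

Lemma next_odd_p_mex A a N : 0 < a -> a <= A -> A %% 3 != 0 -> odd (p_mex A a N) ->
  exists2 N', N < N' <= 16 * (N.+1 * N.+1) & odd (p_mex A a N').
Proof.
move=> a_gt0 a_le_A A3 odd_N.
have [i /andP[i_gt0 i_le3] off_progression] := pent_shift_off_progression a N A3.
set j := N + i; set t := pent_hi j + N.
have le_t : t <= 16 * (N.+1 * N.+1) by have := pent_hi_closed j; rewrite /t /j; nia.
suff /hasP[N' ] : has (fun n => odd (p_mex A a n)) (iota N.+1 (t - N)).
  by rewrite mem_iota => /andP[lt_NN' lt_N't] odd_N'; exists N' => //; rewrite /t in lt_N't *; lia.
apply/hasPn => even_after; have := odd_conv_p_mex a_gt0 a_le_A t.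
rewrite odd_conv_pent_gap ?odd_N ?addn_gt0 ?i_gt0 ?orbT //; last 2 first.
- by rewrite /j; lia.
- by move=> n range_n; apply: even_after; rewrite mem_iota; rewrite /t in range_n; lia.
rewrite (@eq_count _ _ pred0) ?count_pred0 // => k; exact/negbTE/off_progression.
Qed.

Lemma count_iota1_mono (P : pred nat) L L' : L <= L' -> count P (iota 1 L) <= count P (iota 1 L').
Proof. by move=> le_LL'; rewrite -(subnKC le_LL') iotaD count_cat leq_addr. Qed.

Lemma count_iota1_step (P : pred nat) L L' : L < L' -> P L' ->
  (count P (iota 1 L)).+1 <= count P (iota 1 L').
Proof.
move=> lt_LL' PL'; rewrite -(subnKC (ltnW lt_LL')) iotaD count_cat -addn1 leq_add2l.
by rewrite -has_count; apply/hasP; exists L' => //; rewrite mem_iota; lia.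
Qed.

Section OddValues.

Variables A a : nat.
Hypotheses (a_gt0 : 0 < a) (a_le_A : a <= A) (A3 : A %% 3 != 0).

Lemma odd_p_mex0 : odd (p_mex A a 0).
Proof. by rewrite (@odd_p_mex _ _ _ 1) // big_ord1. Qed.

Lemma odd_p_mex_iter k : exists N, [/\ odd (p_mex A a N), 32 * N.+1 <= 2 ^ 2 ^ (k + 3)
  & k <= count (fun n => odd (p_mex A a n)) (iota 1 N)].
Proof.
elim: k => [|k [N [odd_N N_le count_N]]]; first by exists 0; rewrite odd_p_mex0.
have [N' /andP[lt_NN' N'_le] odd_N'] := next_odd_p_mex a_gt0 a_le_A A3 odd_N.
exists N'; split => //; last exact: leq_ltn_trans count_N (count_iota1_step lt_NN' odd_N').
rewrite addSn expnS mul2n -addnn expnD; have := leq_mul N_le N_le; nia.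
Qed.

Lemma count_odd_p_mex_ge k L : 2 ^ 2 ^ (k + 3) <= L ->
  k <= count (fun n => odd (p_mex A a n)) (iota 1 L).
Proof.
move=> le_L; have [N [_ N_le count_N]] := odd_p_mex_iter k.
by apply: leq_trans count_N (count_iota1_mono _ _); lia.
Qed.

End OddValues.

Section LogLog.

Local Open Scope R_scope.

Lemma INR_expn m n : INR (m ^ n)%N = INR m ^ n.
Proof. by elim: n => [//|n IHn]; rewrite expnS mult_INR IHn. Qed.

Lemma leq_Int_part N X : INR N <= X -> (N <= Z.to_nat (Int_part X))%N.
Proof.
move=> le_NX; apply/leP; have [up_gt _] := archimed X.
have : IZR (Z.of_nat N) < IZR (up X) by rewrite -INR_IZR_INZ; lra.
by move/lt_IZR; rewrite /Int_part; lia.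
Qed.

Lemma exists_bracket (u : nat -> R) X : u 0%N <= X -> (exists M, X < u M) ->
  exists k, u k <= X < u k.+1.
Proof.
move=> X_ge [M]; elim: M => [|M IHM] X_lt; first lra.
by case: (Rlt_le_dec X (u M)) => [/IHM|le_uM]; last exists M.
Qed.

Lemma ln_ln_lt k X : 1 < X -> X < 2 ^ (2 ^ k)%N -> ln (ln X) < INR k.
Proof.
move=> X_gt1 X_lt.
have ln2_gt0 : 0 < ln 2 by rewrite -ln_1; apply: ln_increasing; lra.
have ln2_lt1 : ln 2 < 1.
  by rewrite -(ln_exp 1); apply: ln_increasing; have := exp_ineq1 1 R1_neq_R0; lra.
have lnX_gt0 : 0 < ln X by rewrite -ln_1; apply: ln_increasing; lra.
have pow_gt0 : 0 < 2 ^ k by apply: pow_lt; lra.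
have lnX_lt : ln X < 2 ^ k * ln 2.
  by rewrite -(INR_expn 2 k) -ln_pow; [apply: ln_increasing|]; lra.
have : ln (ln X) < ln (2 ^ k * ln 2) by apply: ln_increasing.
rewrite ln_mult ?ln_pow; try lra.
have : ln (ln 2) < 0 by rewrite -ln_1; apply: ln_increasing.
by have := pos_INR k; nra.
Qed.

Lemma odd_count_ge_lnln A a X : (0 < a)%N -> (a <= A)%N -> (A %% 3 != 0)%N ->
  2 ^ (2 ^ 4)%N <= X -> / 8 * ln (ln X) <= INR (odd_count A a X).
Proof.
move=> a_gt0 a_le_A A3 X_ge.
pose u k := 2 ^ (2 ^ (k + 4))%N.
have [|k [uk_le X_lt]] := @exists_bracket u X X_ge.
  have [M M_gt] := INR_unbounded X; exists M; apply: Rlt_le_trans M_gt _.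
  rewrite /u -(INR_expn 2); apply: le_INR; apply/leP.
  apply: ltnW; apply: leq_trans (ltn_expl _ (ltnSn 1)) _.
  by rewrite leq_exp2l // (leq_trans (ltnW (ltn_expl M (ltnSn 1)))) // leq_exp2l // leq_addr.
have count_ge : (k.+1 <= odd_count A a X)%N.
  apply: count_odd_p_mex_ge => //; apply: leq_Int_part; apply: Rle_trans uk_le.
  by rewrite /u INR_expn addSn -addnS; apply: Req_le.
have X_gt1 : 1 < X by apply: (Rlt_le_trans _ _ _ _ X_ge); apply: Rlt_pow_R1; [lra|exact/ltP].
have lnln_lt : ln (ln X) < INR k + 5.
  rewrite (_ : INR k + 5 = INR (k + 5)); last by rewrite plus_INR /=; lra.
  by apply: ln_ln_lt; rewrite // addnS -addSn.
have := le_INR _ _ (leP count_ge); rewrite S_INR.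
by have := pos_INR k; lra.
Qed.

End LogLog.

Theorem theorem1p2 (m p : nat) :
  0 < m -> prime p -> m %% 3 != 0 -> p %% 3 = 1 ->
  exists beta : R, Rlt 0 beta /\
    exists X0 : R, forall X : R, Rle X0 X ->
      Rle (Rmult beta (ln (ln X))) (INR (odd_count (m * p) p X)).
Proof.
move=> m_gt0 p_prime m3 p3.
have p_le_mp : p <= m * p := leq_pmull p m_gt0.
have mp3 : (m * p) %% 3 != 0 by rewrite -modnMm p3 muln1 modn_mod.
exists (Rinv 8); split; first lra.
eexists => X; exact: odd_count_ge_lnln (prime_gt0 p_prime) p_le_mp mp3.
Qed.
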